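(* In a search game (as defined in the context), represented via cell-units, let $B$ be a set of cell-units (possibly of various players), let $a\notin B$ be another cell-unit, and let $s^{1}$ be a cell-unit strategy profile under which every member of $B$ is best-responding. Then there exists a finite sequence of cell-unit improvements $s^{1},\ldots,s^{T}$ such that every member of $B\cup\{a\}$ is best-responding under $s^{T}$.
   Context: A search game has: a finite set of players $N$; a finite set $\Omega$ of locations; for each player $i$ a partition $\Pi_i$ of $\Omega$; a prior $\mu\in\Delta(\Omega)$ with $\mu(\pi_i)>0$ for all cells, and $\mu(\omega|\pi_i)=\mu(\omega)/\mu(\pi_i)$ for $\omega\in\pi_i$; capacities $K_i\in\mathbb{N}$; costs $c_i:\{0,\ldots,K_i\}\to\mathbb{R}_{\ge0}$ with $c_i(0)=0$ and nondecreasing increments $c_i(k+1)-c_i(k)\ge c_i(k)-c_i(k-1)$; rewards $v_i^m(\omega)\ge0$ with $v_i^{m+1}(\omega)\le v_i^m(\omega)$. A cell-unit of player $i$ is a pair $(\pi_i,j)$ with $\pi_i\in\Pi_i$ and $j\in\{1,\ldots,K_i\}$. A cell-unit strategy profile assigns to every cell-unit $(\pi_i,j)$ of every player either a location in $\pi_i$ or the symbol $\lambda$ (''inactive''), such that two distinct cell-units of the same cell are never assigned the same location. It induces the ordinary profile $s$ with $s_i(\pi_i)$ = set of locations assigned to the cell-units of $\pi_i$; let $m_s(\omega)$ be the number of players $i$ with $\omega\in s_i(\pi_i)$ for the cell $\pi_i\ni\omega$. The payoff of the cell $\pi_i$ (and of each of its cell-units) is $u_i(s|\pi_i)=\sum_{\omega\in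 s_i(\pi_i)}\mu(\omega|\pi_i)v_i^{m_s(\omega)}(\omega)-c_i(|s_i(\pi_i)|)$. A cell-unit is best-responding if no change of its own assignment alone (to another location of its cell not assigned to another cell-unit of the same cell, or to $\lambda$), holding all other assignments fixed, strictly increases the payoff of its cell. A sequence of cell-unit improvements is a sequence of cell-unit profiles in which each consecutive pair differs only in the assignment of a single cell-unit, and this change strictly increases the payoff of that cell-unit's cell. *)

From HB Require Import structures.
From mathcomp Require Import all_boot all_order all_algebra.
Set Implicit Arguments. Unset Strict Implicit. Unset Printing Implicit Defensive.
Import Order.TTheory GRing.Theory Num.Theory.
Local Open Scope ring_scope.

(* Data of a search game: players N, locations Omega (both finite),
   partitions P i, prior mu, capacities K, costs c, rewards v (v i m w = v_i^m(w)). *)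
Record search_game (N Omega : finType) (R : realFieldType) := SearchGame {
  P : N -> {set {set Omega}};
  mu : Omega -> R;
  K : N -> nat;
  c : N -> nat -> R;
  v : N -> nat -> Omega -> R
}.

Section Game.
Variables (N Omega : finType) (R : realFieldType) (g : search_game N Omega R).

Definition muset (A : {set Omega}) : R := \sum_(w in A) mu g w.

Definition is_search_game : Prop :=
  [/\ (forall i, partition (P g i) [set: Omega]),
      (forall w, 0 <= mu g w) /\ \sum_(w : Omega) mu g w = 1,
      (forall i pi, pi \in P g i -> 0 < muset pi),
      (forall i, c g i 0%N = 0) /\ (forall i k, (k <= K g i)%N -> 0 <= c g i k)
      /\ (forall i k, (1 <= k)%N -> (k + 1 <= K g i)%N ->
            c g i k - c g i k.-1 <= c g i k.+1 - c g i k)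
    & (forall i m w, 0 <= v g i m w) /\ (forall i m w, v g i m.+1 w <= v g i m w)].

(* Cell-units are triples (i, pi, j) with pi a cell of player i and 1 <= j <= K i. *)
Definition cu := (N * {set Omega} * nat)%type.

Definition is_cu (x : cu) : bool :=
  (x.1.2 \in P g x.1.1) && (0 < x.2 <= K g x.1.1)%N.

(* A cell-unit profile: s i pi j = Some w (assigned location) or None (lambda). *)
Definition profile := N -> {set Omega} -> nat -> option Omega.

(* Validity: values only on cell-units (None elsewhere, a normalisation),
   assigned locations lie in the cell, distinct cell-units of a cell get
   distinct locations. *)
Definition valid_profile (s : profile) : Prop :=
  [/\ (forall i pi j, ~~ is_cu (i, pi, j) -> s i pi j = None),
      (forall i pi j w, is_cu (i, pi, j) -> s i pi j = Some w -> w \in pi)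
    & (forall i pi j j' w, is_cu (i, pi, j) -> is_cu (i, pi, j') -> j <> j' ->
          s i pi j = Some w -> s i pi j' = Some w -> False)].

Definition cell_set (s : profile) (i : N) (pi : {set Omega}) : {set Omega} :=
  [set w | [exists j : 'I_(K g i), s i pi j.+1 == Some w]].

Definition mcount (s : profile) (w : Omega) : nat :=
  #|[set i : N | w \in cell_set s i (pblock (P g i) w)]|.

Definition payoff (s : profile) (i : N) (pi : {set Omega}) : R :=
  \sum_(w in cell_set s i pi) (mu g w / muset pi) * v g i (mcount s w) w
  - c g i #|cell_set s i pi|.

Definition upd (s : profile) (x : cu) (o : option Omega) : profile :=
  fun i pi j => if (i, pi, j) == x then o else s i pi j.

Definition allowed_dev (s : profile) (x : cu) (o : option Omega) : Prop :=
  o = None \/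
  exists w, o = Some w /\ w \in x.1.2 /\
    (forall j', is_cu (x.1.1, x.1.2, j') -> j' <> x.2 -> s x.1.1 x.1.2 j' <> Some w).

Definition best_responding (s : profile) (x : cu) : Prop :=
  forall o, allowed_dev s x o ->
    ~ (payoff s x.1.1 x.1.2 < payoff (upd s x o) x.1.1 x.1.2).

Definition improvement_step (s s' : profile) : Prop :=
  exists x : cu, [/\ is_cu x,
    (forall y : cu, y <> x -> s' y.1.1 y.1.2 y.2 = s y.1.1 y.1.2 y.2)
  & payoff s x.1.1 x.1.2 < payoff s' x.1.1 x.1.2].

End Game.

(* Milchtaich's argument for congestion games with player-specific payoffs.
   A cell-unit choosing an option uses a resource: a location, or the pool of
   inactive units of its cell.  Switching options changes the payoff of the
   cell by the value of the new option at its load plus one minus the value of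
   the old option at its load, and these values decrease with the load.

   After a best reply of [a], the loads differ from those of [s1] by one extra
   unit on a resource t and one missing unit on a resource h.  Every unit of
   B and a stays "settled": it could not gain if all loads were those of [s1].
   While some unit on t can gain by moving elsewhere than h, its best reply
   moves t; otherwise a unit that gains by moving to h, chosen least well off
   among its teammates able to do so, moves and shifts h.  Each kind of move
   decreases a count of rank inversions at the loads of [s1] (plus one for the
   first kind), and once t = h settled units are best-responding. *)

From HB Require Import structures.
From mathcomp Require Import all_boot all_order all_algebra.
From mathcomp Require Import zify lra.
From Stdlib Require Import Classical FunctionalExtensionality.
Set Implicit Arguments. Unset Strict Implicit. Unset Printing Implicit Defensive.
Import Order.TTheory GRing.Theory Num.Theory.
Local Open Scope ring_scope.

Lemma exists_max (T : finType) (d : Order.disp_t) (U : orderType d)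
    (P : T -> Prop) (f : T -> U) x0 :
  P x0 -> exists2 x, P x & forall y, P y -> (f y <= f x)%O.
Proof.
have [n] := ubnP #|[set y | (f x0 < f y)%O]|.
elim: n x0 => [|n IH] x0; first by rewrite ltn0.
rewrite ltnS => le_n Px0.
case: (classic (exists2 y, P y & (f x0 < f y)%O)) => [[y Py lt_xy] | no_better].
  apply: (IH y) => //; apply: leq_trans le_n; apply: proper_card; apply/properP.
  split; last by exists y; rewrite !inE ?ltxx.
  by apply/subsetP => z; rewrite !inE; exact: lt_trans.
by exists x0 => // y Py; rewrite leNgt; apply/negP => lt_xy; apply: no_better; exists y.
Qed.

Lemma card_agree_off (T : finType) (A B : {set T}) x :
  (forall y, y != x -> (y \in A) = (y \in B)) -> (#|A| + (x \in B) = #|B| + (x \in A))%N.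
Proof.
move=> AB; rewrite (cardsD1 x A) (cardsD1 x B).
suff -> : A :\ x = B :\ x by lia.
by apply/setP => y; rewrite !inE; case: eqVneq => //= /AB.
Qed.

Section Game.
Variables (N Omega : finType) (R : realFieldType) (g : search_game N Omega R).

Local Notation profile := (profile N Omega).
Implicit Types (s : profile) (pi : {set Omega}) (w : Omega) (o : option Omega).

(** * Cell sets under a unilateral change *)

Lemma is_cuP i pi j :
  reflect [/\ pi \in P g i, 0 < j & j <= K g i]%N (is_cu g (i, pi, j)).
Proof. exact: and3P. Qed.

Lemma upd_same s i pi j : upd s (i, pi, j) (s i pi j) = s.
Proof.
apply: functional_extensionality => i'; apply: functional_extensionality => pi'.
by apply: functional_extensionality => j'; rewrite /upd; case: eqP => // [[-> -> ->]].
Qed.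

Lemma upd_at s i pi j o : upd s (i, pi, j) o i pi j = o.
Proof. by rewrite /upd eqxx. Qed.

Lemma upd_other s i pi j o i' pi' j' :
  (i', pi', j') != (i, pi, j) -> upd s (i, pi, j) o i' pi' j' = s i' pi' j'.
Proof. by move=> ne; rewrite /upd ifN. Qed.

Lemma cell_setP s i pi w : pi \in P g i ->
  reflect (exists2 j, is_cu g (i, pi, j) & s i pi j = Some w) (w \in cell_set g s i pi).
Proof.
move=> piP; rewrite inE; apply: (iffP existsP) => [[j /eqP sj] | [j /is_cuP [_ j0 jK] sj]].
  by exists j.+1 => //; apply/is_cuP; split.
have jK' : (j.-1 < K g i)%N by lia.
by exists (Ordinal jK'); rewrite /= prednK // sj.
Qed.

Lemma mem_cell_set s i pi j w :
  is_cu g (i, pi, j) -> s i pi j = Some w -> w \in cell_set g s i pi.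
Proof. by move=> /[dup] /is_cuP [piP _ _] xcu sx; apply/cell_setP => //; exists j. Qed.

Lemma card_cell_set_le s i pi : (#|cell_set g s i pi| <= K g i)%N.
Proof.
rewrite -[K g i]card_ord -(card_imset _ (@Some_inj _)).
apply: (leq_trans _ (leq_imset_card (fun j : 'I_(K g i) => s i pi j.+1) _)).
apply: subset_leq_card; apply/subsetP => _ /imsetP [w + ->].
by rewrite inE => /existsP [j /eqP sj]; apply/imsetP; exists j.
Qed.

Lemma allowed_dev_Some s i pi j w :
  allowed_dev g s (i, pi, j) (Some w) ->
  w \in pi /\ (forall j', is_cu g (i, pi, j') -> j' <> j -> s i pi j' <> Some w).
Proof. by case=> [//|[w' [[<-] []]]]. Qed.

Lemma allowed_dev_notin s i pi j w :
  is_cu g (i, pi, j) -> allowed_dev g s (i, pi, j) (Some w) -> s i pi j != Some w ->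
  w \notin cell_set g s i pi.
Proof.
move=> /is_cuP [piP _ _] /allowed_dev_Some [_ free] sxw.
apply/(cell_setP _ _ piP) => [[j' cu' sj']].
by apply: (free j' cu' _ sj') => ej; move: sxw; rewrite -ej sj' eqxx.
Qed.

Lemma allowed_dev_teammate s i pi j j' o :
  allowed_dev g s (i, pi, j) o -> o != s i pi j -> allowed_dev g s (i, pi, j') o.
Proof.
case: o => [w|]; last by left.
move=> /allowed_dev_Some [wpi free] ne; right; exists w; split=> //; split=> // j'' cu'' _ /=.
by have [->|/eqP] := eqVneq j'' j; [apply/eqP; rewrite eq_sym | exact: free].
Qed.

Lemma allowed_dev_upd s i pi j o0 i' pi' j' o :
  allowed_dev g (upd s (i, pi, j) o0) (i', pi', j') o ->
  allowed_dev g s (i', pi', j') o \/ [/\ i' = i, pi' = pi, j' <> j & o = s i pi j].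
Proof.
case: o => [w|]; last by left; left.
move=> /allowed_dev_Some [wpi free].
case: (classic [/\ i' = i, pi' = pi, j' <> j & Some w = s i pi j]) => [|not_old]; first by right.
left; right; exists w; split=> //; split=> // j'' cu'' ne'' /= sw.
have [[ei epi ej] | nx] := eqVneq (i', pi', j'') (i, pi, j).
  by apply: not_old; split => //; [move=> ej'; apply: ne''; rewrite ej ej' | rewrite -sw ei epi ej].
by apply: (free j'' cu'' ne''); rewrite -sw upd_other.
Qed.

Lemma valid_upd s i pi j o :
  valid_profile g s -> is_cu g (i, pi, j) -> allowed_dev g s (i, pi, j) o ->
  valid_profile g (upd s (i, pi, j) o).
Proof.
case=> V1 V2 V3 xcu al; rewrite /upd; split.
- move=> i' pi' j' ncu; case: eqP => [e|_]; last exact: V1.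
  by move: ncu; rewrite e xcu.
- move=> i' pi' j' w' cu'; case: eqP => [[_ -> _]|_]; last exact: V2.
  by move=> ow; move: al; rewrite ow => /allowed_dev_Some [].
- move=> i' pi' j1 j2 w' c1 c2 ne12.
  case: eqP => [[ei epi ej1]|_].
    subst i' pi'; case: eqP => [[ej2]|_]; first by case: ne12; rewrite ej1 ej2.
    move=> ow; move: al; rewrite ow => /allowed_dev_Some [_ free].
    by apply: free c2 _ => e; apply: ne12; rewrite ej1 e.
  case: eqP => [[ei epi ej2]|_]; last exact: V3.
  subst i' pi' j2; move=> s1 ow; move: al; rewrite ow => /allowed_dev_Some [_ free].
  exact: free s1.
Qed.

Lemma improvement_step_upd s i pi j o :
  is_cu g (i, pi, j) -> payoff g s i pi < payoff g (upd s (i, pi, j) o) i pi ->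
  improvement_step g s (upd s (i, pi, j) o).
Proof.
move=> xcu lt; exists (i, pi, j); split => // -[[i' pi'] j'] ne /=.
by rewrite upd_other //; exact/eqP.
Qed.

Lemma cell_set_upd_other s i pi j o i' pi' :
  (i', pi') != (i, pi) -> cell_set g (upd s (i, pi, j) o) i' pi' = cell_set g s i' pi'.
Proof.
move=> ne; apply/setP => w; rewrite !inE; apply: eq_existsb => j'.
rewrite /upd; case: ifP => // /eqP [ei epi _].
by move: ne; rewrite -ei -epi eqxx.
Qed.

Definition set_of_option o : {set Omega} := [set w | o == Some w].

Lemma in_set_of_option o w : (w \in set_of_option o) = (o == Some w).
Proof. by rewrite inE. Qed.

Lemma set_of_optionE o : set_of_option o = if o is Some w then [set w] else set0.
Proof.
by apply/setP => w; case: o => [w'|]; rewrite !inE // (inj_eq (@Some_inj _)) eq_sym.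
Qed.

Lemma cell_set_upd s i pi j o :
  valid_profile g s -> is_cu g (i, pi, j) ->
  cell_set g (upd s (i, pi, j) o) i pi =
  (cell_set g s i pi :\: set_of_option (s i pi j)) :|: set_of_option o.
Proof.
case=> _ _ uniq xcu; have /is_cuP [piP _ _] := xcu.
apply/setP => w; rewrite in_setU in_setD !in_set_of_option.
apply/(cell_setP _ _ piP)/idP => [[j' cu']|].
  rewrite /upd; case: eqP => [_ ->|ne sj']; first by rewrite eqxx orbT.
  rewrite (introT (cell_setP _ _ piP)); last by exists j'.
  case: eqP => // sj; case: (uniq _ _ _ _ _ xcu cu' _ sj sj') => ej.
  by apply: ne; rewrite ej.
case/orP => [/andP [sjw /(cell_setP _ _ piP) [j' cu' sj']] | /eqP <-].
  exists j' => //; rewrite /upd; case: eqP => [[ej]|//].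
  by move: sjw; rewrite -ej sj' eqxx.
by exists j => //; rewrite /upd eqxx.
Qed.

Lemma set_of_option_sub s i pi j :
  is_cu g (i, pi, j) -> set_of_option (s i pi j) \subset cell_set g s i pi.
Proof. by move=> xcu; apply/subsetP => w; rewrite in_set_of_option => /eqP /(mem_cell_set xcu). Qed.

Lemma set_of_option_disjoint s i pi j o :
  is_cu g (i, pi, j) -> allowed_dev g s (i, pi, j) o -> o != s i pi j ->
  [disjoint set_of_option o & cell_set g s i pi].
Proof.
move=> xcu al ne; apply/pred0P => w /=; rewrite in_set_of_option; apply/andP => -[/eqP ow].
by apply/negP; apply: allowed_dev_notin xcu _ _; rewrite -ow // eq_sym.
Qed.

Lemma card_cell_set_upd s i pi j o :
  valid_profile g s -> is_cu g (i, pi, j) -> allowed_dev g s (i, pi, j) o ->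
  o != s i pi j ->
  (#|cell_set g (upd s (i, pi, j) o) i pi| + (s i pi j != None) =
   #|cell_set g s i pi| + (o != None))%N.
Proof.
move=> V xcu al ne; have AS := set_of_option_sub s xcu.
have dBS := set_of_option_disjoint xcu al ne.
rewrite cell_set_upd // cardsU (cardsDS AS) (disjoint_setI0 _) ?cards0 ?subn0; last first.
  by rewrite disjoint_sym; apply: disjointWr dBS; exact: subsetDl.
have := subset_leq_card AS; rewrite !set_of_optionE.
by case: (s i pi j) => [w0|]; case: o {al ne dBS} => [w1|]; rewrite ?cards1 ?cards0 /=; lia.
Qed.

Lemma cell_set_upd_balance s i pi j o w :
  valid_profile g s -> is_cu g (i, pi, j) -> allowed_dev g s (i, pi, j) o ->
  o != s i pi j ->
  ((w \in cell_set g (upd s (i, pi, j) o) i pi) + (s i pi j == Some w) =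
   (w \in cell_set g s i pi) + (o == Some w))%N.
Proof.
move=> V xcu al ne; rewrite cell_set_upd // in_setU in_setD !in_set_of_option.
have [sw|_] := eqVneq (s i pi j) (Some w).
  by rewrite (mem_cell_set xcu sw) -sw (negbTE ne).
have [ow|_] /= := eqVneq o (Some w); last by rewrite ?andbT ?orbF.
by rewrite orbT (negbTE (allowed_dev_notin xcu _ _)) -?ow // eq_sym.
Qed.

Hypothesis Hg : is_search_game g.

Lemma partition_cells i : partition (P g i) [set: Omega].
Proof. by case: Hg. Qed.

Lemma pblock_cell i pi w : pi \in P g i -> w \in pi -> pblock (P g i) w = pi.
Proof. by move=> piP; apply: def_pblock piP; case/and3P: (partition_cells i). Qed.

Lemma mcount_upd s i pi j o w :
  valid_profile g s -> is_cu g (i, pi, j) -> allowed_dev g s (i, pi, j) o ->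
  o != s i pi j ->
  (mcount g (upd s (i, pi, j) o) w + (s i pi j == Some w) =
   mcount g s w + (o == Some w))%N.
Proof.
move=> V xcu al ne; have /is_cuP [piP _ _] := xcu.
suff balance_i : ((i \in [set i' | w \in cell_set g (upd s (i, pi, j) o) i' (pblock (P g i') w)])
    + (s i pi j == Some w) =
    (i \in [set i' | w \in cell_set g s i' (pblock (P g i') w)]) + (o == Some w))%N.
  rewrite /mcount; move: balance_i; set A := [set i' | _]; set A' := [set i' | _].
  suff : (#|A| + (i \in A') = #|A'| + (i \in A))%N by lia.
  apply: card_agree_off => i' ne'.
  rewrite [_ \in A]inE [_ \in A']inE cell_set_upd_other //.
  by apply: contraNneq ne' => -[->].
rewrite [i \in [set _ | _]]inE [i \in [set _ | _]]inE.
have [wpi|wNpi] := boolP (w \in pi).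
  by rewrite (pblock_cell piP wpi); exact: cell_set_upd_balance.
have -> : (s i pi j == Some w) = false.
  by apply/eqP => sw; case: V => _ inpi _; move: wNpi; rewrite (inpi _ _ _ _ xcu sw).
have -> : (o == Some w) = false.
  by apply/eqP => ow; move: al; rewrite ow => /allowed_dev_Some [wpi _]; move: wNpi; rewrite wpi.
rewrite cell_set_upd_other //; apply: contraNneq wNpi => -[epi].
have /and3P [/eqP cov _ _] := partition_cells i.
by rewrite -epi mem_pblock cov inE.
Qed.

Lemma mcount_upd_eq s i pi j o w :
  valid_profile g s -> is_cu g (i, pi, j) -> allowed_dev g s (i, pi, j) o ->
  o != s i pi j -> s i pi j != Some w -> o != Some w ->
  mcount g (upd s (i, pi, j) o) w = mcount g s w.
Proof.
move=> V xcu al ne /negbTE sxw /negbTE ow.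
by have := mcount_upd w V xcu al ne; rewrite sxw ow !addn0.
Qed.

Lemma mcount_upd_new s i pi j o w :
  valid_profile g s -> is_cu g (i, pi, j) -> allowed_dev g s (i, pi, j) o ->
  o != s i pi j -> o = Some w ->
  mcount g (upd s (i, pi, j) o) w = (mcount g s w).+1.
Proof.
move=> V xcu al ne ow; have := mcount_upd w V xcu al ne.
by rewrite ow eqxx -ow eq_sym (negbTE ne) addn0 addn1.
Qed.

(** * Payoff differences and loads *)

Definition marginal_cost i k : R := c g i k - c g i k.-1.

(* Staying inactive while [n] units of the cell are inactive saves the
   marginal cost of its [K - n + 1]-th active unit. *)
Definition option_value i pi o n : R :=
  if o is Some w then mu g w / muset g pi * v g i n w
  else marginal_cost i (K g i - n.-1).

Definition load s i pi o : nat :=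
  if o is Some w then mcount g s w else (K g i - #|cell_set g s i pi|)%N.

Definition stay_value s i pi o : R := option_value i pi o (load s i pi o).
Definition join_value s i pi o : R := option_value i pi o (load s i pi o).+1.

Definition resource_of i pi o : Omega + N * {set Omega} :=
  if o is Some w then inl w else inr (i, pi).

Lemma resource_of_inj i pi : injective (resource_of i pi).
Proof. by case=> [w|] [w'|] // [->]. Qed.

Lemma payoff_upd s i pi j o :
  valid_profile g s -> is_cu g (i, pi, j) -> allowed_dev g s (i, pi, j) o ->
  o != s i pi j ->
  payoff g (upd s (i, pi, j) o) i pi =
  payoff g s i pi + join_value s i pi o - stay_value s i pi (s i pi j).
Proof.
move=> V xcu al ne; set s' := upd s (i, pi, j) o.
set S := cell_set g s i pi; set A := set_of_option (s i pi j).
set C := set_of_option o.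
have AS : A \subset S := set_of_option_sub s xcu.
have CS : [disjoint C & S] := set_of_option_disjoint xcu al ne.
have m_out w : w \in S :\: A -> mcount g s' w = mcount g s w.
  rewrite in_setD => /andP [wA wS]; apply: mcount_upd_eq => //.
    by rewrite -in_set_of_option.
  by rewrite -in_set_of_option (disjointFl CS wS).
have m_in w : w \in C -> mcount g s' w = (mcount g s w).+1.
  by rewrite in_set_of_option => /eqP; exact: mcount_upd_new.
have S'E : cell_set g s' i pi = (S :\: A) :|: C := cell_set_upd o V xcu.
have S'C : [disjoint S :\: A & C].
  by rewrite disjoint_sym; apply: disjointWr CS; exact: subsetDl.
have card_S' := card_cell_set_upd V xcu al ne; rewrite -/s' -/S in card_S'.
have le_S' := card_cell_set_le s' i pi.
have le_S : (#|S| <= K g i)%N := card_cell_set_le s i pi.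
rewrite /payoff -/s' -/S S'E [_ :|: C]setUC in card_S' le_S' *.
rewrite (big_setID C) [in RHS](big_setID A) (setIidPr AS).
rewrite setUK setDUl setDv set0U (setDidPl S'C).
have -> : \sum_(w in S :\: A) mu g w / muset g pi * v g i (mcount g s' w) w =
          \sum_(w in S :\: A) mu g w / muset g pi * v g i (mcount g s w) w.
  by apply: eq_bigr => w /m_out ->.
have -> : \sum_(w in C) mu g w / muset g pi * v g i (mcount g s' w) w =
          \sum_(w in C) mu g w / muset g pi * v g i (mcount g s w).+1 w.
  by apply: eq_bigr => w /m_in ->.
rewrite /join_value /stay_value /load /option_value /marginal_cost -/S.
move: ne card_S' le_S' le_S; rewrite /A /C !set_of_optionE.
clear m_in m_out CS S'C S'E AS al s' A C.
case: (s i pi j) => [w0|]; case: o => [w1|] //= _;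
  rewrite ?big_set1 ?big_set0 => card_S' le_S' le_S.
- have -> : #|w1 |: S :\ w0| = #|S| by lia.
  lra.
- have -> : #|set0 :|: S :\ w0| = #|S|.-1 by lia.
  by rewrite (_ : K g i - (K g i - #|S|) = #|S|)%N; [lra | lia].
- have -> : #|w1 |: S :\: set0| = #|S|.+1 by lia.
  by rewrite (_ : K g i - (K g i - #|S|).-1 = #|S|.+1)%N /=; [lra | lia].
Qed.

Lemma load_upd s i pi j o i' pi' o' :
  valid_profile g s -> is_cu g (i, pi, j) -> allowed_dev g s (i, pi, j) o ->
  o != s i pi j ->
  (load (upd s (i, pi, j) o) i' pi' o' + (resource_of i' pi' o' == resource_of i pi (s i pi j)) =
   load s i' pi' o' + (resource_of i' pi' o' == resource_of i pi o))%N.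
Proof.
move=> V xcu al ne; case: o' => [w|] /=.
  have inlE q : (inl w == resource_of i pi q) = (q == Some w) by case: q => //= q; rewrite eq_sym.
  by rewrite !inlE; exact: mcount_upd.
have [[-> ->]|ne_cell] := eqVneq (i', pi') (i, pi).
  have inrE q : (inr (i, pi) == resource_of i pi q) = (q == None) by case: q => //=; rewrite eqxx.
  rewrite !inrE; have := card_cell_set_upd V xcu al ne.
  have := card_cell_set_le (upd s (i, pi, j) o) i pi; have := card_cell_set_le s i pi.
  by case: (s i pi j) ne => [?|]; case: o {al} => [?|] //= _; lia.
rewrite cell_set_upd_other //.
have inrE q : (inr (i', pi') == resource_of i pi q) = false.
  by case: q => //=; apply: contraNF ne_cell => /eqP [-> ->].
by rewrite !inrE.
Qed.

Lemma marginal_cost_nondecr i k k' : (k <= k' <= K g i)%N -> marginal_cost i k <= marginal_cost i k'.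
Proof.
have [_ _ _ [c0 [c_ge0 c_convex]] _] := Hg.
move=> /andP [kk' k'K]; have kK := leq_trans kk' k'K.
apply: (homo_leq_in (D := [pred n | n <= K g i]%N) (f := marginal_cost i) lexx le_trans)
  => //.
  by move=> m n _ nK p /andP [_ /ltnW pn]; rewrite !inE in nK *; exact: leq_trans pn nK.
move=> [|n] _; rewrite inE /marginal_cost /= => nK.
  by rewrite c0 subrr subr0; exact: c_ge0.
by have := c_convex i n.+1 isT; rewrite addn1; apply.
Qed.

Lemma v_nonincr i w m n : (m <= n)%N -> v g i n w <= v g i m w.
Proof.
have [_ _ _ _ [_ v_decr]] := Hg.
elim: n => [|n IH]; first by rewrite leqn0 => /eqP ->.
by rewrite leq_eqVlt => /predU1P [->//|/IH]; exact: le_trans (v_decr _ _ _).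
Qed.

Lemma option_value_nonincr i pi o m n :
  pi \in P g i -> (m <= n)%N -> option_value i pi o n <= option_value i pi o m.
Proof.
move=> piP mn; case: o => [w|] /=.
  have [_ [mu_ge0 _] mu_gt0 _ _] := Hg.
  by apply: ler_wpM2l (v_nonincr _ _ mn); rewrite divr_ge0 // ltW // (mu_gt0 i).
by apply: marginal_cost_nondecr; lia.
Qed.

Lemma join_le_stay s i pi o : pi \in P g i -> join_value s i pi o <= stay_value s i pi o.
Proof. by move=> piP; exact: option_value_nonincr. Qed.

Lemma improvement_upd s i pi j o :
  valid_profile g s -> is_cu g (i, pi, j) -> allowed_dev g s (i, pi, j) o ->
  o != s i pi j ->
  (payoff g s i pi < payoff g (upd s (i, pi, j) o) i pi) =
  (stay_value s i pi (s i pi j) < join_value s i pi o).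
Proof. by move=> V xcu al ne; rewrite payoff_upd //; apply/idP/idP; lra. Qed.

Lemma best_respondingP s i pi j :
  valid_profile g s -> is_cu g (i, pi, j) ->
  best_responding g s (i, pi, j) <->
  (forall o, allowed_dev g s (i, pi, j) o -> o != s i pi j ->
     join_value s i pi o <= stay_value s i pi (s i pi j)).
Proof.
move=> V xcu; split=> [br o al ne | br o al /=].
  by rewrite leNgt -improvement_upd //; apply/negP; exact: br.
have [->|ne] := eqVneq o (s i pi j); first by rewrite upd_same ltxx.
by apply/negP; rewrite improvement_upd // -leNgt br.
Qed.

Lemma not_best_responding s i pi j :
  valid_profile g s -> is_cu g (i, pi, j) -> ~ best_responding g s (i, pi, j) ->
  exists o, allowed_dev g s (i, pi, j) o /\
    stay_value s i pi (s i pi j) < join_value s i pi o.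
Proof.
move=> V xcu not_br; apply: NNPP => none; apply: not_br; apply/best_respondingP => // o al _.
by rewrite leNgt; apply/negP => gain; apply: none; exists o.
Qed.

Definition improvement s i pi j y :=
  [/\ allowed_dev g s (i, pi, j) y, y != s i pi j
    & stay_value s i pi (s i pi j) < join_value s i pi y].

Definition best_improvement s i pi j y :=
  improvement s i pi j y /\
  forall o, allowed_dev g s (i, pi, j) o -> o != s i pi j ->
    join_value s i pi o <= join_value s i pi y.

Lemma exists_best_improvement s i pi j o :
  is_cu g (i, pi, j) -> allowed_dev g s (i, pi, j) o ->
  stay_value s i pi (s i pi j) < join_value s i pi o ->
  exists y, best_improvement s i pi j y.
Proof.
move=> /is_cuP [piP _ _] al gain.
have ne : o != s i pi j.
  by apply: contraTneq gain => ->; rewrite -leNgt join_le_stay.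
have [y [aly ney] best] := exists_max (join_value s i pi)
  (P := fun o => allowed_dev g s (i, pi, j) o /\ o != s i pi j) (conj al ne).
exists y; split => [|o' al' ne']; last exact: best.
by split => //; exact: lt_le_trans gain (best o (conj al ne)).
Qed.

Inductive improves_to : profile -> profile -> Prop :=
| improves_refl s : improves_to s s
| improves_step s s' s'' :
    improvement_step g s s' -> valid_profile g s' -> improves_to s' s'' -> improves_to s s''.

Lemma improves_to_seq s s' : valid_profile g s -> improves_to s s' ->
  exists (T : nat) (sq : nat -> profile),
    [/\ sq 0%N = s, (forall t, (t <= T)%N -> valid_profile g (sq t)),
        (forall t, (t < T)%N -> improvement_step g (sq t) (sq t.+1)) & sq T = s'].
Proof.
move=> V r; elim: r V => [s0|s0 s2 s3 step V2 _ IH] V0.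
  by exists 0%N, (fun _ => s0); split => // t; rewrite leqn0 => /eqP ->.
have [T [sq [sq0 Vsq steps sqT]]] := IH V2.
exists T.+1, (fun t => if t is t'.+1 then sq t' else s0); split => //.
  by case.
by case=> [|t] /= lt_tT; [rewrite sq0 | exact: steps].
Qed.

(* Counts the pairs (cell-unit, option) in which [val] ranks the option strictly
   above the unit's current one; the index range contains every cell-unit. *)
Definition potential (val : N -> {set Omega} -> option Omega -> R) s : nat :=
  (\sum_(u : N * {set Omega} * 'I_(\max_i K g i).+1)
    #|[set o | (val u.1.1 u.1.2 (s u.1.1 u.1.2 u.2) < val u.1.1 u.1.2 o)%R]|)%N.

Lemma potential_upd_lt val s i pi j y :
  is_cu g (i, pi, j) -> val i pi (s i pi j) < val i pi y ->
  (potential val (upd s (i, pi, j) y) < potential val s)%N.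
Proof.
move=> /is_cuP [_ _ jK] lt_y.
have jn : (j < (\max_i K g i).+1)%N by rewrite ltnS (leq_trans jK) // (leq_bigmax i).
rewrite /potential (bigD1 (i, pi, Ordinal jn)) //=.
rewrite [X in (_ < X)%N](bigD1 (i, pi, Ordinal jn)) //= upd_at -addSn.
apply: leq_add.
  apply: proper_card; apply/properP; split.
    by apply/subsetP => o; rewrite !inE; exact: lt_trans.
  by exists y; rewrite !inE ?lt_y ?ltxx.
by apply: leq_sum => -[[i' pi'] j'] ne; rewrite upd_other.
Qed.

(** * The improvement path *)

Section Extension.
Variables (B : cu N Omega -> Prop) (ia : N) (pia : {set Omega}) (ja : nat) (s1 : profile).
Hypotheses (B_cu : forall b, B b -> is_cu g b) (a_cu : is_cu g (ia, pia, ja)).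

Definition tracked b := B b \/ b = (ia, pia, ja).

Lemma tracked_cu i pi j : tracked (i, pi, j) -> is_cu g (i, pi, j).
Proof. by case=> [/B_cu|->]. Qed.

Lemma tracked_cell i pi j : tracked (i, pi, j) -> pi \in P g i.
Proof. by move=> /tracked_cu /is_cuP []. Qed.

Local Notation load0 := (load s1).

Definition settled s i pi j :=
  forall o, allowed_dev g s (i, pi, j) o -> o != s i pi j ->
    join_value s1 i pi o <= stay_value s1 i pi (s i pi j).

(* Compared with [s1], resource [t] carries one unit more and [h] one unit less;
   the proof moves these two defects around until they cancel. *)
Definition shifted s t h := forall i pi o,
  (load s i pi o + (resource_of i pi o == h) = load0 i pi o + (resource_of i pi o == t))%N.

Section Shifted.
Variables (s : profile) (t h : Omega + N * {set Omega}).
Hypothesis sh : shifted s t h.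

Lemma load_le_load0S i pi o : (load s i pi o <= (load0 i pi o).+1)%N.
Proof. by have := sh i pi o; case: (_ == h); case: (_ == t) => /=; lia. Qed.

Lemma load0_le_loadS i pi o : (load0 i pi o <= (load s i pi o).+1)%N.
Proof. by have := sh i pi o; case: (_ == h); case: (_ == t) => /=; lia. Qed.

Lemma load_le_load0 i pi o : resource_of i pi o != t -> (load s i pi o <= load0 i pi o)%N.
Proof. by have := sh i pi o => + /negbTE rt; rewrite rt; case: (_ == h) => /=; lia. Qed.

Lemma load0_le_load i pi o : resource_of i pi o != h -> (load0 i pi o <= load s i pi o)%N.
Proof. by have := sh i pi o => + /negbTE rh; rewrite rh; case: (_ == t) => /=; lia. Qed.

Lemma load_eq_load0 i pi o :
  resource_of i pi o != t -> resource_of i pi o != h -> load s i pi o = load0 i pi o.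
Proof. by move=> rt rh; apply/eqP; rewrite eqn_leq load_le_load0 // load0_le_load. Qed.

Lemma load_surplus i pi o :
  t != h -> resource_of i pi o = t -> load s i pi o = (load0 i pi o).+1.
Proof. by move=> /negbTE th rt; have := sh i pi o; rewrite rt eqxx th; lia. Qed.

Lemma load_hole i pi o :
  t != h -> resource_of i pi o = h -> (load s i pi o).+1 = load0 i pi o.
Proof. by rewrite eq_sym => /negbTE ht rh; have := sh i pi o; rewrite rh eqxx ht; lia. Qed.

End Shifted.

Lemma load_unshifted s t i pi o : shifted s t t -> load s i pi o = load0 i pi o.
Proof. by move=> /(_ i pi o); lia. Qed.

Lemma shifted_init t : shifted s1 t t.
Proof. by []. Qed.

Lemma shifted_upd_surplus s t h i pi j y :
  valid_profile g s -> is_cu g (i, pi, j) -> allowed_dev g s (i, pi, j) y ->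
  y != s i pi j -> shifted s t h -> resource_of i pi (s i pi j) = t ->
  shifted (upd s (i, pi, j) y) (resource_of i pi y) h.
Proof.
move=> V xcu al ne sh rt i' pi' o; have := load_upd i' pi' o V xcu al ne.
by have := sh i' pi' o; rewrite rt; do 3!case: (_ == _); lia.
Qed.

Lemma shifted_upd_hole s t h i pi j y :
  valid_profile g s -> is_cu g (i, pi, j) -> allowed_dev g s (i, pi, j) y ->
  y != s i pi j -> shifted s t h -> resource_of i pi y = h ->
  shifted (upd s (i, pi, j) y) t (resource_of i pi (s i pi j)).
Proof.
move=> V xcu al ne sh rh i' pi' o; have := load_upd i' pi' o V xcu al ne.
by have := sh i' pi' o; rewrite rh; do 3!case: (_ == _); lia.
Qed.

Lemma settled_init i pi j :
  valid_profile g s1 -> is_cu g (i, pi, j) -> best_responding g s1 (i, pi, j) ->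
  settled s1 i pi j.
Proof. by move=> V xcu /(best_respondingP V xcu). Qed.

Lemma best_responding_settled s t i pi j :
  valid_profile g s -> is_cu g (i, pi, j) -> shifted s t t -> settled s i pi j ->
  best_responding g s (i, pi, j).
Proof.
move=> V xcu sh st; apply/best_respondingP => // o al ne.
by rewrite /join_value /stay_value !(load_unshifted _ _ _ sh); exact: st.
Qed.

(* The option freed by [x] becomes available to its teammates; minimality
   ensures that none of those that could also move to [y] prefers it. *)
Definition min_in_team s i pi j y :=
  forall j', tracked (i, pi, j') -> allowed_dev g s (i, pi, j') y -> y != s i pi j' ->
    stay_value s i pi (s i pi j) <= stay_value s i pi (s i pi j').

Lemma settled_upd_mover s t h i pi j y :
  shifted s t h -> pi \in P g i -> best_improvement s i pi j y ->
  settled s i pi j \/ t = h -> settled (upd s (i, pi, j) y) i pi j.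
Proof.
move=> sh piP [[aly ney gain] best] settled_x o al'; rewrite upd_at => ne_y.
set x0 := s i pi j in ney gain best settled_x *.
have al : allowed_dev g s (i, pi, j) o by case: (allowed_dev_upd al') => // -[_ _].
have y_hi : join_value s i pi y <= stay_value s1 i pi y.
  exact: option_value_nonincr piP (load0_le_loadS sh _ _ _).
have x0_lo : join_value s1 i pi x0 <= stay_value s i pi x0.
  exact: option_value_nonincr piP (load_le_load0S sh _ _ _).
apply: le_trans y_hi; have [->|ne_x0] := eqVneq o x0; first exact: le_trans x0_lo (ltW gain).
have [le_o|gt_o] := leqP (load s i pi o) (load0 i pi o).
  by apply: le_trans (best o al ne_x0); apply: option_value_nonincr.
have rt : resource_of i pi o = t.
  by apply/eqP; apply: contraTT gt_o => /(load_le_load0 sh); rewrite leqNgt.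
have [st|eth] := settled_x; last by subst h; move: gt_o; rewrite (load_unshifted _ _ _ sh) ltnn.
have rx0 : resource_of i pi x0 != t.
  by apply: contra_neq ne_x0 => rx0; apply: (@resource_of_inj i pi); rewrite rt rx0.
apply: le_trans (st o al ne_x0) _; apply: ltW; apply: le_lt_trans gain.
exact: option_value_nonincr piP (load_le_load0 sh _).
Qed.

Lemma settled_upd_other s t h i pi j y i' pi' j' :
  shifted s t h -> pi \in P g i -> best_improvement s i pi j y ->
  (resource_of i pi y = h -> min_in_team s i pi j y) ->
  tracked (i', pi', j') -> (i', pi', j') != (i, pi, j) ->
  settled s i' pi' j' -> settled (upd s (i, pi, j) y) i' pi' j'.
Proof.
move=> sh piP [[aly ney gain] _] team tz nez st_z o al'; rewrite upd_other // => ne_o.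
case: (allowed_dev_upd al') => [al|[ei epi _ eo]]; first exact: st_z.
subst i' pi' o; set x0 := s i pi j in ney gain *; set z0 := s i pi j' in ne_o st_z *.
have x0_lo : join_value s1 i pi x0 <= stay_value s i pi x0.
  exact: option_value_nonincr piP (load_le_load0S sh _ _ _).
have [zy|nzy] := eqVneq z0 y.
  rewrite zy; apply: ltW; apply: le_lt_trans x0_lo _; apply: lt_le_trans gain _.
  exact: option_value_nonincr piP (load0_le_loadS sh _ _ _).
have nyz : y != z0 by rewrite eq_sym.
have alz : allowed_dev g s (i, pi, j') y := allowed_dev_teammate j' aly ney.
have [ry|ry] := eqVneq (resource_of i pi y) h.
  have rz : resource_of i pi z0 != h.
    by apply: contra_neq nzy => rz; apply: (@resource_of_inj i pi); rewrite rz ry.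
  apply: le_trans x0_lo _; apply: le_trans (team ry j' tz alz nyz) _.
  exact: option_value_nonincr piP (load0_le_load sh _).
apply: le_trans (st_z y alz nyz); apply: le_trans x0_lo _.
apply: ltW; apply: lt_le_trans gain _.
by apply: option_value_nonincr piP _; rewrite ltnS (load0_le_load sh).
Qed.

Lemma settled_upd s t h i pi j y :
  shifted s t h -> tracked (i, pi, j) -> best_improvement s i pi j y ->
  settled s i pi j \/ t = h -> (resource_of i pi y = h -> min_in_team s i pi j y) ->
  (forall i' pi' j', tracked (i', pi', j') -> (i', pi', j') != (i, pi, j) ->
     settled s i' pi' j') ->
  forall i' pi' j', tracked (i', pi', j') -> settled (upd s (i, pi, j) y) i' pi' j'.
Proof.
move=> sh tx bi settled_x team others i' pi' j' tz; have piP := tracked_cell tx.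
have [[-> -> ->]|nez] := eqVneq (i', pi', j') (i, pi, j).
  exact: settled_upd_mover sh piP bi settled_x.
exact: settled_upd_other sh piP bi team tz nez (others _ _ _ tz nez).
Qed.

Lemma settled_join_le s t h i pi j o :
  shifted s t h -> pi \in P g i -> settled s i pi j ->
  allowed_dev g s (i, pi, j) o -> o != s i pi j ->
  resource_of i pi (s i pi j) != t -> resource_of i pi o != h ->
  join_value s i pi o <= stay_value s i pi (s i pi j).
Proof.
move=> sh piP st al ne rt rh.
apply: le_trans (_ : _ <= join_value s1 i pi o) (le_trans (st o al ne) _).
  by apply: option_value_nonincr piP _; rewrite ltnS (load0_le_load sh).
exact: option_value_nonincr piP (load_le_load0 sh _).
Qed.

Lemma join0_lt_of_lower_teammate s t h i pi j j' o :
  shifted s t h -> pi \in P g i -> settled s i pi j' ->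
  resource_of i pi (s i pi j) = t -> resource_of i pi (s i pi j') != h ->
  stay_value s i pi (s i pi j') < stay_value s i pi (s i pi j) ->
  allowed_dev g s (i, pi, j') o -> o != s i pi j' ->
  join_value s1 i pi o < stay_value s i pi (s i pi j).
Proof.
move=> sh piP st rt rh lt al ne; apply: le_lt_trans (st o al ne) _.
have rt' : resource_of i pi (s i pi j') != t.
  by apply: contraTneq lt => rt'; rewrite (resource_of_inj (etrans rt' (esym rt))) ltxx.
by rewrite /stay_value -(load_eq_load0 sh rt' rh).
Qed.

Lemma not_min_in_team s i pi j y : ~ min_in_team s i pi j y ->
  exists j', [/\ tracked (i, pi, j'), allowed_dev g s (i, pi, j') y, y != s i pi j' &
    stay_value s i pi (s i pi j') < stay_value s i pi (s i pi j)].
Proof.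
move=> not_min; apply: NNPP => none; apply: not_min => j' tj al ne.
by rewrite leNgt; apply/negP => lt; apply: none; exists j'.
Qed.

Definition invariant s t h :=
  [/\ valid_profile g s, shifted s t h
    & forall i pi j, tracked (i, pi, j) -> settled s i pi j].

Definition all_best_responding s :=
  forall i pi j, tracked (i, pi, j) -> best_responding g s (i, pi, j).

Definition reaches_best_responses s := exists2 s', improves_to s s' & all_best_responding s'.

Lemma reaches_upd s i pi j y :
  valid_profile g s -> is_cu g (i, pi, j) -> improvement s i pi j y ->
  reaches_best_responses (upd s (i, pi, j) y) -> reaches_best_responses s.
Proof.
move=> V xcu [al ne gain] [s' r br]; exists s' => //.
apply: improves_step r; last exact: valid_upd.
by apply: improvement_step_upd; rewrite // improvement_upd.
Qed.

Lemma invariant_all_best_responding s t : invariant s t t -> all_best_responding s.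
Proof.
by case=> V sh st i pi j tx; exact: best_responding_settled V (tracked_cu tx) sh (st _ _ _ tx).
Qed.

Definition surplus_settled s t h :=
  forall i pi j, tracked (i, pi, j) -> resource_of i pi (s i pi j) = t ->
  forall o, allowed_dev g s (i, pi, j) o -> o != s i pi j -> resource_of i pi o != h ->
    join_value s i pi o <= stay_value s i pi (s i pi j).

Definition closing_move s t h i pi j y :=
  [/\ tracked (i, pi, j), resource_of i pi (s i pi j) = t, improvement s i pi j y,
      resource_of i pi y = h & min_in_team s i pi j y].

Lemma reaches_by_closing_move s t h i pi j y :
  invariant s t h -> closing_move s t h i pi j y ->
  (forall o, allowed_dev g s (i, pi, j) o -> o != s i pi j ->
     join_value s i pi o <= join_value s i pi y) ->
  reaches_best_responses s.
Proof.
move=> [V sh st] [tx rt imp ry team] best; have xcu := tracked_cu tx.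
have [al ne _] := imp.
apply: (reaches_upd V xcu imp); exists (upd s (i, pi, j) y); first exact: improves_refl.
apply: (@invariant_all_best_responding _ h); split; first exact: valid_upd.
  by rewrite -{1}ry; exact: shifted_upd_surplus.
exact: settled_upd sh tx (conj imp best) (or_introl (st _ _ _ tx)) (fun _ => team)
  (fun i' pi' j' tz _ => st _ _ _ tz).
Qed.

Lemma best_improvement_to_hole s h i pi j y :
  improvement s i pi j y -> resource_of i pi y = h ->
  (forall o, allowed_dev g s (i, pi, j) o -> o != s i pi j -> resource_of i pi o != h ->
     join_value s i pi o <= stay_value s i pi (s i pi j)) ->
  best_improvement s i pi j y.
Proof.
move=> imp ry others; split => // o al ne; have [_ _ gain] := imp.
have [ro|ro] := eqVneq (resource_of i pi o) h.
  by rewrite (resource_of_inj (etrans ro (esym ry))).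
exact: le_trans (others o al ne ro) (ltW gain).
Qed.

Lemma min_in_team_to_hole s t h i pi j o y :
  shifted s t h -> tracked (i, pi, j) ->
  (forall i' pi' j', tracked (i', pi', j') -> settled s i' pi' j') ->
  resource_of i pi (s i pi j) = t -> improvement s i pi j o -> resource_of i pi o != h ->
  resource_of i pi y = h -> min_in_team s i pi j y.
Proof.
move=> sh tx st rt [al ne gain] roh ry; have piP := tracked_cell tx.
apply: NNPP => /not_min_in_team [j' [tz alz nyz lt]].
have rz : resource_of i pi (s i pi j') != h.
  by apply: contra_neq nyz => rz; apply: (@resource_of_inj i pi); rewrite ry rz.
have [oz|noz] := eqVneq o (s i pi j').
  by move: (lt_trans lt gain); rewrite -oz ltNge join_le_stay.
have rot : resource_of i pi o != t.
  by apply: contra_neq ne => rot; apply: (@resource_of_inj i pi); rewrite rot rt.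
have alo : allowed_dev g s (i, pi, j') o := allowed_dev_teammate j' al ne.
have := join0_lt_of_lower_teammate sh piP (st _ _ _ tz) rt rz lt alo noz.
by rewrite /join_value -(load_eq_load0 sh rot roh) => /(lt_trans gain); rewrite ltxx.
Qed.

Lemma exists_min_teammate s i pi j y :
  tracked (i, pi, j) -> improvement s i pi j y ->
  exists j', [/\ tracked (i, pi, j'), improvement s i pi j' y & min_in_team s i pi j' y].
Proof.
move=> tj [al ne gain]; have /is_cuP [_ _ jK] := tracked_cu tj.
pose Team (k : 'I_(K g i).+1) :=
  [/\ tracked (i, pi, k : nat), allowed_dev g s (i, pi, k : nat) y & y != s i pi k].
have [k [tk alk nek] kmin] := exists_max (fun k : 'I_(K g i).+1 => - stay_value s i pi (s i pi k))
  (P := Team) (x0 := Ordinal (jK : (j < (K g i).+1)%N)) (And3 tj al ne).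
exists k; split => //.
  split => //; apply: le_lt_trans gain; rewrite -lerN2.
  exact: kmin (Ordinal (jK : (j < (K g i).+1)%N)) (And3 tj al ne).
move=> j' tj' alj' nej'; have /is_cuP [_ _ j'K] := tracked_cu tj'.
by rewrite -lerN2; exact: kmin (Ordinal (j'K : (j' < (K g i).+1)%N)) (And3 tj' alj' nej').
Qed.

Lemma join0_le_of_no_closing s t h i pi j o :
  invariant s t h -> t != h -> (forall i' pi' j' y, ~ closing_move s t h i' pi' j' y) ->
  tracked (i, pi, j) -> resource_of i pi (s i pi j) = t ->
  allowed_dev g s (i, pi, j) o -> o != s i pi j -> resource_of i pi o = h ->
  join_value s1 i pi o <= stay_value s i pi (s i pi j).
Proof.
move=> [V sh st] th noclose tx rt al ne ro; have piP := tracked_cell tx.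
have [le_o|gain] := leP (join_value s i pi o) (stay_value s i pi (s i pi j)).
  apply: le_trans le_o; rewrite /join_value (load_hole sh th ro).
  exact: option_value_nonincr piP (leqnSn _).
have [j' [tz alz noz lt]] := not_min_in_team (noclose i pi j o \o And5 tx rt (And3 al ne gain) ro).
have rz : resource_of i pi (s i pi j') != h.
  by apply: contra_neq noz => rz; apply: (@resource_of_inj i pi); rewrite ro rz.
exact: ltW (join0_lt_of_lower_teammate sh piP (st _ _ _ tz) rt rz lt alz noz).
Qed.

Lemma surplus_settled_upd s t h i pi j y :
  invariant s t h -> t != h -> surplus_settled s t h ->
  (forall i' pi' j' y', ~ closing_move s t h i' pi' j' y') ->
  is_cu g (i, pi, j) -> improvement s i pi j y -> resource_of i pi y = h ->
  resource_of i pi (s i pi j) != t ->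
  surplus_settled (upd s (i, pi, j) y) t (resource_of i pi (s i pi j)).
Proof.
move=> inv th sur noclose xcu [aly ney _] ry rxt iq piq jq tq rq o al' ne' ro.
have [V sh _] := inv; set x0 := s i pi j in ney ry rxt ro *.
have nq : (iq, piq, jq) != (i, pi, j).
  by apply/eqP => -[ei epi ej]; move: rq th; rewrite ei epi ej upd_at ry => ->; rewrite eqxx.
rewrite upd_other // in rq ne' *.
have LU o' := load_upd iq piq o' V xcu aly ney; rewrite -/x0 ry in LU.
have tx0 : t != resource_of i pi x0 by rewrite eq_sym.
have -> : stay_value (upd s (i, pi, j) y) iq piq (s iq piq jq) = stay_value s iq piq (s iq piq jq).
  rewrite /stay_value; congr (option_value _ _ _ _).
  by have := LU (s iq piq jq); rewrite rq (negbTE th) (negbTE tx0); lia.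
case: (allowed_dev_upd al') => [al|[ei epi _ eo]]; last by move: ro; rewrite ei epi eo eqxx.
have [roh|roh] := eqVneq (resource_of iq piq o) h.
  rewrite /join_value; have := LU o; rewrite (negbTE ro) roh eqxx addn0 addn1 => ->.
  rewrite (load_hole sh th roh); exact: join0_le_of_no_closing inv th noclose tq rq al ne' roh.
rewrite /join_value; have := LU o; rewrite (negbTE ro) (negbTE roh) !addn0 => ->.
exact: sur.
Qed.

Lemma reaches_from_hole_phase s t h :
  invariant s t h -> t != h -> surplus_settled s t h -> reaches_best_responses s.
Proof.
have [n] := ubnP (potential (stay_value s1) s).
elim: n s t h => [|n IH] s t h; rewrite ?ltn0 // ltnS => le_n inv th sur.
have [V sh st] := inv.
case: (classic (exists i pi j y,
    [/\ tracked (i, pi, j), improvement s i pi j y & resource_of i pi y = h]))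
  => [[i [pi [jp [y [tp imp ry]]]]] | none]; last first.
  exists s => [|i pi j tx]; first exact: improves_refl.
  apply/best_respondingP => [||o al ne] //; first exact: tracked_cu.
  have [ro|ro] := eqVneq (resource_of i pi o) h.
    by rewrite leNgt; apply/negP => gain; apply: none; exists i, pi, j, o.
  have [rt|rt] := eqVneq (resource_of i pi (s i pi j)) t; first exact: sur.
  exact: settled_join_le sh (tracked_cell tx) (st _ _ _ tx) al ne rt ro.
case: (classic (exists i pi j y, closing_move s t h i pi j y))
  => [[i' [pi' [j' [y' cm]]]] | noclose].
  apply: (reaches_by_closing_move inv cm); have [tx rt imp' ry' _] := cm.
  by have [_] := best_improvement_to_hole imp' ry' (sur _ _ _ tx rt).
have {}noclose i' pi' j' y' : ~ closing_move s t h i' pi' j' y'.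
  by move=> cm; apply: noclose; exists i', pi', j', y'.
have [ju [tu imp_u team]] := exists_min_teammate tp imp.
have [alu neu gain_u] := imp_u; have piP := tracked_cell tu; have ucu := tracked_cu tu.
set u0 := s i pi ju in neu gain_u team *.
have rut : resource_of i pi u0 != t.
  by apply/eqP => rt; apply: (noclose i pi ju y); split.
have ruh : resource_of i pi u0 != h.
  by apply: contra_neq neu => ruh; apply: (@resource_of_inj i pi); rewrite ry ruh.
have bi : best_improvement s i pi ju y.
  apply: best_improvement_to_hole imp_u ry _ => o al ne ro.
  exact: settled_join_le sh piP (st _ _ _ tu) al ne rut ro.
apply: (reaches_upd V ucu imp_u); apply: (IH _ t (resource_of i pi u0)).
- apply: leq_trans le_n; apply: potential_upd_lt ucu _.
  by rewrite /stay_value -(load_eq_load0 sh rut ruh) -(load_hole sh th ry).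
- split; [exact: valid_upd | exact: shifted_upd_hole | ].
  exact: settled_upd sh tu bi (or_introl (st _ _ _ tu)) (fun _ => team)
    (fun i' pi' j' tz _ => st _ _ _ tz).
- by rewrite eq_sym.
- exact: surplus_settled_upd inv th sur noclose ucu imp_u ry rut.
Qed.

Lemma reaches_from_surplus_phase s t h : invariant s t h -> reaches_best_responses s.
Proof.
have [n] := ubnP (potential (join_value s1) s).
elim: n s t h => [|n IH] s t h; rewrite ?ltn0 // ltnS => le_n inv.
have [V sh st] := inv; have [eth|th] := eqVneq t h.
  by subst h; exists s; [exact: improves_refl | exact: invariant_all_best_responding inv].
case: (classic (exists i pi j o, [/\ tracked (i, pi, j), resource_of i pi (s i pi j) = t,
    improvement s i pi j o & resource_of i pi o != h]))
  => [[i [pi [j [o [tx rt imp roh]]]]] | none]; last first.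
  apply: (reaches_from_hole_phase inv th) => i pi j tx rt o al ne ro.
  by rewrite leNgt; apply/negP => gain; apply: none; exists i, pi, j, o.
have xcu := tracked_cu tx; have [al _ gain] := imp.
have [y [imp_y best]] := exists_best_improvement xcu al gain.
have [ry|ry] := eqVneq (resource_of i pi y) h.
  apply: (reaches_by_closing_move inv _ best); split => //.
  exact: min_in_team_to_hole sh tx st rt imp roh ry.
have [aly ney gain_y] := imp_y.
have ryt : resource_of i pi y != t.
  by apply: contra_neq ney => ryt; apply: (@resource_of_inj i pi); rewrite ryt rt.
apply: (reaches_upd V xcu imp_y); apply: (IH _ (resource_of i pi y) h).
- apply: leq_trans le_n; apply: potential_upd_lt xcu _.
  by rewrite /join_value -(load_eq_load0 sh ryt ry) -(load_surplus sh th rt).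
- split; [exact: valid_upd | exact: shifted_upd_surplus | ].
  apply: settled_upd sh tx (conj imp_y best) (or_introl (st _ _ _ tx)) _
    (fun i' pi' j' tz _ => st _ _ _ tz).
  by move/eqP; rewrite (negbTE ry).
Qed.

Lemma reaches_from_start :
  valid_profile g s1 -> (forall b, B b -> best_responding g s1 b) ->
  reaches_best_responses s1.
Proof.
move=> V br; case: (classic (best_responding g s1 (ia, pia, ja))) => [br_a|not_br_a].
  by exists s1 => [|i pi j [/br|->]]; first exact: improves_refl.
have [o [al gain]] := not_best_responding V a_cu not_br_a.
have [y [imp best]] := exists_best_improvement a_cu al gain; have [aly ney _] := imp.
apply: (reaches_upd V a_cu imp).
apply: (@reaches_from_surplus_phase _ (resource_of ia pia y) (resource_of ia pia (s1 ia pia ja))).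
split; [exact: valid_upd | exact: shifted_upd_surplus (shifted_init _) _ | ].
apply: settled_upd (shifted_init (resource_of ia pia (s1 ia pia ja))) (or_intror erefl)
  (conj imp best) (or_intror erefl) _ _.
  by move=> /resource_of_inj ey; move: ney; rewrite ey eqxx.
move=> i pi j [/[dup] /B_cu bcu /br br_b | ->] ne; last by rewrite eqxx in ne.
exact: settled_init V bcu br_b.
Qed.

End Extension.
End Game.

Unset Implicit Arguments.
Set Strict Implicit.

Theorem lemma1 (N Omega : finType) (R : realFieldType) (g : search_game N Omega R)
    (Hg : is_search_game g) (B : cu N Omega -> Prop) (a : cu N Omega)
    (s1 : profile N Omega) :
  (forall b, B b -> is_cu g b) -> is_cu g a -> ~ B a ->
  valid_profile g s1 ->
  (forall b, B b -> best_responding g s1 b) ->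
  exists (T : nat) (sq : nat -> profile N Omega),
    [/\ sq 0%N = s1,
        (forall t, (t <= T)%N -> valid_profile g (sq t)),
        (forall t, (t < T)%N -> improvement_step g (sq t) (sq t.+1))
      & (forall b, B b \/ b = a -> best_responding g (sq T) b)].
Proof.
move=> B_cu a_cu _ V br; case: a a_cu => [[ia pia] ja] a_cu.
have [s' reach all_br] := reaches_from_start Hg B_cu a_cu V br.
have [T [sq [sq0 Vsq steps sqT]]] := improves_to_seq V reach.
by exists T, sq; split => // -[[i pi] j] tb; rewrite sqT; exact: all_br.
Qed.
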